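(* Fix $M\ge1$, a finite set $\mathcal F$, a matrix $A\in[0,1]^{|\mathcal F|\times M}$, a vector $\boldsymbol\beta\in[0,1]^{|\mathcal F|}$, $D=\mathrm{diag}(1,\dots,M)$ and a constant $C>0$, and assume the set $\mathcal F_0=\{\mathbf w\in\mathbb{R}^M: A\mathbf w=\boldsymbol\beta,\ \mathbf 0\le\mathbf w\le C\mathbf 1\}$ is nonempty. Let $\theta_{\min}=\min_{\mathbf w\in\mathcal F_0}\mathbf 1^\top AD(\mathbf w+\mathbf 1)$ and $\theta_{\max}=\max_{\mathbf w\in\mathcal F_0}\mathbf 1^\top AD(\mathbf w+\mathbf 1)$. For each $n$, let $\hat A_n$ and $\hat{\boldsymbol\beta}_n$ be random estimators with $\max_{f,y}|\hat A_{n,fy}-A_{fy}|=O_p(n^{-1/2})$ and $\max_f|\hat\beta_{n,f}-\beta_f|=O_p(n^{-1/2})$. Let $\hat m_n=\min_{\mathbf 0\le\mathbf w\le C\mathbf 1}\|\hat A_n\mathbf w-\hat{\boldsymbol\beta}_n\|_\infty$, let $\kappa_n>0$ be deterministic, and define the set-expansion estimators \[\hat\theta_{n,\min}=\min\Big\{\mathbf 1^\top\hat A_nD(\mathbf w+\mathbf 1):\ \|\hat A_n\mathbf w-\hat{\boldsymbol\beta}_n\|_\infty\le\hat m_n+\tfrac{\kappa_n}{\sqrt n},\ \mathbf 0\le\mathbf w\le C\mathbf 1\Big\}\] and $\hat\theta_{n,\max}$ analogously with $\max$ in place of $\min$. If $\kappa_n\to\infty$ and $\kappa_n/\sqrt n\to0$,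 then \[\hat\theta_{n,\min}-\theta_{\min}=O_p\Big(\frac{\kappa_n}{\sqrt n}\Big),\qquad \hat\theta_{n,\max}-\theta_{\max}=O_p\Big(\frac{\kappa_n}{\sqrt n}\Big).\]
   Context: In the application, $A=A_x=[\mathbb{P}(R=1,F=f,Y=y\mid X=x)]_{f,y}$ and $\boldsymbol\beta=\boldsymbol\beta_x=(\mathbb{P}(R=0,F=f\mid X=x))_f$ for a fixed covariate stratum $x$, $n$ is the number of sampled units in that stratum, and $C$ is a known bound such that the true weights $w_x(y)=1/\mathbb{P}(R=1\mid Y=y,X=x)-1$ lie in $[0,C]$ (so $\mathcal F_0\neq\emptyset$); $\theta_{\min},\theta_{\max}$ are the bounds on $\mathbb{E}[Y\mid X=x]$. $\|\cdot\|_\infty$ is the max-absolute-entry norm. *)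

From HB Require Import structures.
From mathcomp Require Import all_boot all_order all_algebra.
From mathcomp Require Import all_classical all_reals all_analysis.
Set Implicit Arguments. Unset Strict Implicit. Unset Printing Implicit Defensive.
Import Order.TTheory GRing.Theory Num.Theory.
Import numFieldNormedType.Exports.
Local Open Scope classical_set_scope.
Local Open Scope ring_scope.

Section Defs.
Variable R : realType.

Definition supnorm (k : nat) (v : 'I_k -> R) : R := \big[Num.max/0]_(i < k) `|v i|.

Definition matvec (k M : nat) (A : 'I_k -> 'I_M -> R) (w : 'I_M -> R) : 'I_k -> R :=
  fun f => \sum_(y < M) A f y * w y.

Definition box (M : nat) (C : R) (w : 'I_M -> R) : Prop :=
  forall y, 0 <= w y <= C.

(* 1^T A D (w + 1), D = diag(1,...,M): the (0-indexed) column y has weight y+1 *)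
Definition objective (k M : nat) (A : 'I_k -> 'I_M -> R) (w : 'I_M -> R) : R :=
  \sum_(f < k) \sum_(y < M) A f y * (y.+1)%:R * (w y + 1).

Definition F0 (k M : nat) (A : 'I_k -> 'I_M -> R) (beta : 'I_k -> R) (C : R) : set ('I_M -> R) :=
  [set w | box C w /\ forall f, matvec A w f = beta f].

Definition theta_min k M (A : 'I_k -> 'I_M -> R) beta C : R :=
  inf [set objective A w | w in F0 A beta C].
Definition theta_max k M (A : 'I_k -> 'I_M -> R) beta C : R :=
  sup [set objective A w | w in F0 A beta C].

Definition mhat k M (A : 'I_k -> 'I_M -> R) (beta : 'I_k -> R) C : R :=
  inf [set supnorm (fun f => matvec A w f - beta f) | w in box C].

(* expanded feasible set with slack t = kappa_n / sqrt n *)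
Definition expanded k M (A : 'I_k -> 'I_M -> R) (beta : 'I_k -> R) C (t : R)
  : set ('I_M -> R) :=
  [set w | box C w /\ supnorm (fun f => matvec A w f - beta f) <= mhat A beta C + t].

Definition thetahat_min k M (A : 'I_k -> 'I_M -> R) beta C t : R :=
  inf [set objective A w | w in expanded A beta C t].
Definition thetahat_max k M (A : 'I_k -> 'I_M -> R) beta C t : R :=
  sup [set objective A w | w in expanded A beta C t].

(* X_n = O_p(a_n), stated with outer probability (so no measurability of X_n is
   needed; coincides with the usual definition when X_n is measurable) *)
Definition Op {d : measure_display} {T : measurableType d}
  (P : probability T R) (X : nat -> T -> R) (a : nat -> R) : Prop :=
  forall eps : R, 0 < eps -> exists Mc : R, exists N : nat, forall n : nat, (N <= n)%N ->
    exists S : set T, [/\ measurable S, [set t | Mc * a n < `|X n t| ] `<=` S &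
                         (P S <= eps%:E)%E].

End Defs.

From HB Require Import structures.
From mathcomp Require Import all_boot all_order all_algebra.
From mathcomp Require Import all_classical all_reals all_analysis.
From mathcomp Require Import ring lra zify.
Import Order.TTheory GRing.Theory Num.Theory.
Import numFieldNormedType.Exports.
Local Open Scope classical_set_scope.
Local Open Scope ring_scope.

(* With r := M C max|Ahat - A| + max|bhat - beta|, every w in F0 violates the estimated
   constraints by at most r, so the expanded set contains F0 as soon as kappa_n / sqrt n >= r;
   conversely every point of the expanded set violates the true constraints by at most
   2 r + kappa_n / sqrt n.  A Hoffman-type error bound, obtained by Fourier--Motzkin
   elimination, moves such a point into F0 while changing the objective by at most a constant
   times its violation.  Both errors are therefore O(kappa_n / sqrt n) on the events where
   r <= K / sqrt n, and kappa_n -> oo absorbs the constant K. *)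

Set Implicit Arguments. Unset Strict Implicit. Unset Printing Implicit Defensive.

(** * Fourier--Motzkin elimination *)

Section LinearInequalities.
Variables (R : realFieldType) (N : nat).

Definition ineq := (seq R * R)%type.

Definition lhs (g : seq R) (x : nat -> R) : R := \sum_(i < N) g`_i * x i.

Definition sat (s : seq ineq) (x : nat -> R) : Prop :=
  forall c, c \in s -> lhs c.1 x <= c.2.

Definition set_coord (x : nat -> R) n t : nat -> R :=
  fun i => if i == n then t else x i.

Lemma sat_cons c s x : sat (c :: s) x <-> lhs c.1 x <= c.2 /\ sat s x.
Proof.
split=> [h|[hc hs] c']; first by split=> [|c' cs]; apply: h; rewrite inE ?eqxx ?cs ?orbT.
by rewrite inE => /orP[/eqP->|/hs].
Qed.

Lemma sat_cat s1 s2 x : sat (s1 ++ s2) x <-> sat s1 x /\ sat s2 x.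
Proof.
split=> [h|[h1 h2] c]; first by split=> c cs; apply: h; rewrite mem_cat cs ?orbT.
by rewrite mem_cat => /orP[/h1|/h2].
Qed.

Lemma sat_map_enum (I : finType) (F : I -> ineq) x :
  sat [seq F i | i <- enum I] x <-> forall i, lhs (F i).1 x <= (F i).2.
Proof.
split=> [h i|h _ /mapP[i _ ->] //]; apply: h.
by apply/mapP; exists i; rewrite ?mem_enum.
Qed.

Lemma sat_ext s x y : (forall i, (i < N)%N -> x i = y i) -> sat s x -> sat s y.
Proof.
move=> exy sx c cs; rewrite /lhs (eq_bigr (fun i : 'I_N => c.1`_i * x i)) ?sx //.
by move=> i _; rewrite exy.
Qed.

Lemma lhs_set_coord g x n t : (n < N)%N ->
  lhs g (set_coord x n t) = lhs g x + g`_n * (t - x n).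
Proof.
move=> ltnN; rewrite /lhs (bigD1 (Ordinal ltnN)) //= [X in _ = X + _](bigD1 (Ordinal ltnN)) //=.
rewrite /set_coord eqxx -addrAC mulrBr addrCA subrr addr0; congr (_ + _).
by apply: eq_bigr => i; rewrite -val_eqE /= => /negbTE ->.
Qed.

Lemma set_coord_id x n : set_coord x n (x n) = x.
Proof. by apply: funext => i; rewrite /set_coord; case: eqP => [->|]. Qed.

Lemma set_coord2 x n a b : set_coord (set_coord x n a) n b = set_coord x n b.
Proof. by apply: funext => i; rewrite /set_coord; case: eqP. Qed.

Lemma exists_between (lo hi : seq R) :
  (forall l u, l \in lo -> u \in hi -> l <= u) ->
  exists t, (forall l, l \in lo -> l <= t) /\ (forall u, u \in hi -> t <= u).
Proof.
move=> lohi; pose m := \big[Num.min/0]_(u <- hi) u.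
exists (\big[Num.max/m]_(l <- lo) l); split=> [l llo|u uhi].
  exact: le_bigmax_seq.
rewrite big_seq; apply: bigmax_le => [|l llo]; first exact: ge_bigmin_seq.
exact: lohi.
Qed.

Definition fm_comb n (p q : ineq) : ineq :=
  (mkseq (fun i => - q.1`_n * p.1`_i + p.1`_n * q.1`_i) N,
   - q.1`_n * p.2 + p.1`_n * q.2).

Definition fm_step n (s : seq ineq) : seq ineq :=
  [seq c <- s | c.1`_n == 0] ++
  [seq fm_comb n p q | p <- [seq c <- s | 0 < c.1`_n], q <- [seq c <- s | c.1`_n < 0]].

Lemma lhs_fm_comb n p q x :
  lhs (fm_comb n p q).1 x = - q.1`_n * lhs p.1 x + p.1`_n * lhs q.1 x.
Proof.
rewrite /lhs !mulr_sumr -big_split; apply: eq_bigr => i _.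
by rewrite nth_mkseq // mulrDl !mulrA.
Qed.

Definition fm_bound n (c : ineq) x : R := x n + (c.2 - lhs c.1 x) / c.1`_n.

Lemma set_coord_sat_pos n c x t : (n < N)%N -> 0 < c.1`_n ->
  (lhs c.1 (set_coord x n t) <= c.2) = (t <= fm_bound n c x).
Proof.
move=> ltnN cpos; rewrite lhs_set_coord // /fm_bound.
by rewrite -[in RHS]lerBlDl ler_pdivlMr // mulrC lerBrDl.
Qed.

Lemma set_coord_sat_neg n c x t : (n < N)%N -> c.1`_n < 0 ->
  (lhs c.1 (set_coord x n t) <= c.2) = (fm_bound n c x <= t).
Proof.
move=> ltnN cneg; rewrite lhs_set_coord // /fm_bound.
by rewrite -[in RHS]lerBrDl ler_ndivrMr // mulrC lerBrDl.
Qed.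

Lemma fm_step_sound n s x t : (n < N)%N ->
  sat s (set_coord x n t) -> sat (fm_step n s) x.
Proof.
move=> ltnN sxt c; rewrite mem_cat => /orP[|/allpairsP[[p q] /= [pP qN ->]]].
  rewrite mem_filter => /andP[/eqP cn0 cs].
  by have := sxt c cs; rewrite lhs_set_coord // cn0 mul0r addr0.
move: pP qN; rewrite !mem_filter => /andP[ppos ps] /andP[qneg qs].
have := sxt p ps; have := sxt q qs; rewrite !lhs_set_coord // lhs_fm_comb /=.
move: ppos qneg; set a := p.1`_n; set b := q.1`_n => ppos qneg hq hp.
nra.
Qed.

(* The combined rows say that every lower bound on x_n (rows with a negative coefficient) lies
   below every upper bound (rows with a positive coefficient). *)
Lemma fm_step_complete n s x : (n < N)%N ->
  sat (fm_step n s) x -> exists t, sat s (set_coord x n t).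
Proof.
move=> ltnN sx; set Pos := [seq c <- s | 0 < c.1`_n]; set Neg := [seq c <- s | c.1`_n < 0].
have [|t [lo_t t_hi]] := @exists_between
    [seq fm_bound n q x | q <- Neg] [seq fm_bound n p x | p <- Pos].
  move=> _ _ /mapP[q qN ->] /mapP[p pP ->].
  have := sx (fm_comb n p q); rewrite mem_cat allpairs_f ?orbT // => /(_ isT).
  rewrite lhs_fm_comb /= => comb_sat.
  move: pP qN; rewrite /fm_bound lerD2l !mem_filter.
  move=> /andP[ppos _] /andP[qneg _].
  set a := p.1`_n in ppos comb_sat *; set b := q.1`_n in qneg comb_sat *.
  set u := (p.2 - _) / a; set v := (q.2 - _) / b.
  have ab_pos : 0 < a * - b by rewrite mulr_gt0 ?oppr_gt0.
  have abu : a * - b * u = - b * (p.2 - lhs p.1 x).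
    by rewrite /u; field; rewrite gt_eqF.
  have abv : a * - b * v = - (a * (q.2 - lhs q.1 x)).
    by rewrite /v; field; rewrite lt_eqF.
  rewrite -(ler_pM2l ab_pos) abu abv; lra.
exists t => c cs; have [cneg|cpos|c0] := ltrgtP c.1`_n 0.
- by rewrite set_coord_sat_neg //; apply: lo_t; apply: map_f; rewrite mem_filter cneg.
- by rewrite set_coord_sat_pos //; apply: t_hi; apply: map_f; rewrite mem_filter cpos.
- rewrite lhs_set_coord // c0 mul0r addr0; apply: sx.
  by rewrite mem_cat mem_filter c0 eqxx cs.
Qed.

Fixpoint fm_elim m s := if m is m'.+1 then fm_elim m' (fm_step m'.+2 s) else s.

Lemma fm_elimP m s x : (m.+2 <= N)%N ->
  sat (fm_elim m s) x <->
  exists2 y, (forall i, i < 2 \/ m.+2 <= i -> y i = x i)%N & sat s y.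
Proof.
elim: m s x => [|m IHm] s x ltmN /=.
  split=> [sx|[y yx sy]]; first by exists x.
  by rewrite -(_ : y = x) //; apply: funext => i; apply: yx; lia.
rewrite IHm; last exact: ltnW.
split=> [[y yx /fm_step_complete [|t syt]]|[y yx sy]]; first lia.
  exists (set_coord y m.+2 t) => // i i_out; rewrite /set_coord.
  by case: eqP => [ei|_]; [exfalso; lia | apply: yx; lia].
exists (set_coord y m.+2 (x m.+2)).
  by move=> i i_out; rewrite /set_coord; case: eqP => [->|ne] //; apply: yx; lia.
by apply: (@fm_step_sound _ _ _ (y m.+2)); rewrite ?set_coord2 ?set_coord_id.
Qed.

End LinearInequalities.

Section PlanarProjection.
Variable R : realFieldType.

(* Rows with [a c < 0] absorb the slack once [L >= |b c| / |a c|]; rows with [a c > 0] hold at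
   every point below [z0], and [z0] itself is taken otherwise. *)
Lemma planar_slack_lipschitz (T : eqType) (s : seq T) (a b e : T -> R) z0 :
  (forall c, c \in s -> a c * z0 <= e c) ->
  exists2 L, 0 <= L & forall z d, 0 <= d ->
    (forall c, c \in s -> a c * z + b c * d <= e c) ->
    exists2 z', (forall c, c \in s -> a c * z' <= e c) & z' <= z + L * d.
Proof.
move=> sat_z0; exists (\big[Num.max/0]_(c <- s) (`|b c| / `|a c|)) => [|z d d0 sat_zd].
  exact: bigmax_ge_id.
set L := \big[_/_]_(_ <- _) _.
have [z0_le|lt_z0] := lerP z0 (z + L * d); first by exists z0.
exists (z + L * d) => // c cs; have := sat_zd c cs.
have [aneg|apos|a0] := ltrgtP (a c) 0.
- have : `|b c| / `|a c| <= L by exact: (le_bigmax_seq 0 c xpredT (fun c => `|b c| / `|a c|) cs).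
  rewrite [`|a c|]ltr0_norm // ler_pdivrMr ?oppr_gt0 // => bL.
  have b_ge : - `|b c| <= b c by rewrite lerNl -normrN ler_norm.
  nra.
- by have := sat_z0 c cs; nra.
- by have := sat_z0 c cs; rewrite a0 !mul0r.
Qed.

Definition plane_point (z d : R) : nat -> R :=
  fun i => match i with 0 => z | 1 => d | _ => 0 end.

Lemma lhs_plane_point M g z d : lhs M.+2 g (plane_point z d) = g`_0 * z + g`_1 * d.
Proof. by rewrite /lhs !big_ord_recl big1 ?addr0 ?addrA // => i _; rewrite mulr0. Qed.

Lemma fm_elim_planeP M (s : seq (ineq R)) z d :
  sat M.+2 (fm_elim M.+2 M s) (plane_point z d) <->
  exists y, [/\ y 0%N = z, y 1%N = d & sat M.+2 s y].
Proof.
rewrite fm_elimP //; split=> [[y yzd sy]|[y [yz yd sy]]].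
  by exists y; rewrite !yzd; auto.
exists (fun i => if (i < M.+2)%N then y i else plane_point z d i).
  by move=> [|[|i]] /= i_out; rewrite ?yz ?yd // ifF //; apply/negbTE; lia.
by apply: sat_ext sy => i ->.
Qed.

(* A Hoffman-type bound: projecting the polyhedron onto (x_0, x_1) by Fourier--Motzkin
   elimination reduces it to the planar lemma above. *)
Lemma sat_slack_lipschitz M (s : seq (ineq R)) : (exists y0, y0 1%N = 0 /\ sat M.+2 s y0) ->
  exists2 L, 0 <= L & forall y, sat M.+2 s y -> 0 <= y 1%N ->
    exists y', [/\ y' 1%N = 0, sat M.+2 s y' & y' 0%N <= y 0%N + L * y 1%N].
Proof.
move=> [y0 [y01 sy0]]; set E := fm_elim M.+2 M s.
have planeP z d : sat M.+2 E (plane_point z d) <->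
    forall c, c \in E -> c.1`_0 * z + c.1`_1 * d <= c.2.
  by split=> h c cE; have := h c cE; rewrite lhs_plane_point.
have [|L L0 HL] := @planar_slack_lipschitz _ E (fun c => c.1`_0) (fun c => c.1`_1) snd (y0 0%N).
  have /planeP sat_y0 : sat M.+2 E (plane_point (y0 0%N) 0) by apply/fm_elim_planeP; exists y0.
  by move=> c /sat_y0; rewrite mulr0 addr0.
exists L => // y sy y1; have [|z' sz' z'le] := HL (y 0%N) (y 1%N) y1.
  by apply/planeP; apply/fm_elim_planeP; exists y.
have /fm_elim_planeP [y' [y'0 y'1 sy']] : sat M.+2 E (plane_point z' 0).
  by apply/planeP => c cE; rewrite mulr0 addr0; apply: sz'.
by exists y'; rewrite y'0.
Qed.

End PlanarProjection.

(** * The relaxed feasible set *)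

Section RelaxedFeasibility.
Variables (R : realType) (k M : nat) (A : 'I_k -> 'I_M -> R) (beta : 'I_k -> R) (C : R).

(* Points of [R^(M+2)] are read as [(z, d, w_0, ..., w_(M-1))]. *)
Definition coefs (a b : R) (g : 'I_M -> R) : seq R :=
  a :: b :: mkseq (fun j => oapp g 0 (insub j : option 'I_M)) M.

Definition w_of (y : nat -> R) : 'I_M -> R := fun i => y i.+2.

Lemma lhs_coefs a b g y :
  lhs M.+2 (coefs a b g) y = a * y 0%N + b * y 1%N + \sum_(i < M) g i * w_of y i.
Proof.
rewrite /lhs !big_ord_recl addrA; congr (_ + _); apply: eq_bigr => -[j ltjM] _ /=.
by rewrite nth_mkseq // add0n insubT.
Qed.

Lemma sum_oppl (g w : 'I_M -> R) : \sum_(i < M) - g i * w i = - \sum_(i < M) g i * w i.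
Proof. by rewrite -sumrN; apply: eq_bigr => i _; rewrite mulNr. Qed.

Lemma sum_delta (w : 'I_M -> R) i : \sum_(j < M) (j == i)%:R * w j = w i.
Proof. by rewrite (bigD1 i) //= eqxx mul1r big1 ?addr0 // => j /negbTE ->; rewrite mul0r. Qed.

Definition system (c : 'I_M -> R) : seq (ineq R) :=
  [:: (coefs 1 0 (fun i => - c i), 0), (coefs (-1) 0 c, 0) &
   [seq (coefs 0 (-1) (A f), beta f) | f <- enum 'I_k] ++
   [seq (coefs 0 (-1) (fun i => - A f i), - beta f) | f <- enum 'I_k] ++
   [seq (coefs 0 0 (fun j => - (j == i)%:R), 0) | i <- enum 'I_M] ++
   [seq (coefs 0 0 (fun j => (j == i)%:R), C) | i <- enum 'I_M]].

Lemma systemP c y : sat M.+2 (system c) y <->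
  [/\ y 0%N = \sum_(i < M) c i * w_of y i,
      forall f, `|matvec A (w_of y) f - beta f| <= y 1%N & box C (w_of y)].
Proof.
rewrite /system !sat_cons !sat_cat !sat_map_enum !lhs_coefs sum_oppl /matvec /=.
set S := \sum_(i < M) _; split=> [[lo_S [hi_S [hiA [loA [lo_w hi_w]]]]]|[yS res w_box]].
- split; first lra.
  + move=> f; have := hiA f; have := loA f; rewrite !lhs_coefs sum_oppl ler_norml.
    move=> hlo hhi; apply/andP; split; lra.
  + move=> i; have := lo_w i; have := hi_w i; rewrite !lhs_coefs sum_oppl !sum_delta.
    move=> hlo hhi; apply/andP; split; lra.
- do ![split] => [||f|f|i|i]; rewrite ?lhs_coefs ?sum_oppl ?sum_delta; try lra.
  + by have := res f; rewrite ler_norml => /andP[]; lra.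
  + by have := res f; rewrite ler_norml => /andP[]; lra.
  + by have /andP[] := w_box i; lra.
  + by have /andP[] := w_box i; lra.
Qed.

Definition embed (z d : R) (w : 'I_M -> R) : nat -> R :=
  fun j => match j with 0 => z | 1 => d | j.+2 => oapp w 0 (insub j : option 'I_M) end.

Lemma w_of_embed z d w : w_of (embed z d w) = w.
Proof. by apply: funext => -[j ltjM]; rewrite /w_of /= insubT. Qed.

Definition relaxed (d : R) : set ('I_M -> R) :=
  [set w | box C w /\ forall f, `|matvec A w f - beta f| <= d].

Lemma F0_linear_lipschitz (c : 'I_M -> R) : F0 A beta C !=set0 ->
  exists2 L, 0 <= L & forall d w, 0 <= d -> relaxed d w ->
    exists2 w', F0 A beta C w' & \sum_(i < M) c i * w' i <= \sum_(i < M) c i * w i + L * d.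
Proof.
move=> [w0 [w0_box w0_eq]].
have [|L L0 HL] := @sat_slack_lipschitz R M (system c).
  exists (embed (\sum_(i < M) c i * w0 i) 0 w0); split=> //.
  by apply/systemP; rewrite w_of_embed; split=> // f; rewrite w0_eq subrr normr0.
exists L => // d w d0 [w_box res].
have [|y' [y'1 /systemP[y'0 res' box'] le']] := HL (embed (\sum_(i < M) c i * w i) d w) _ d0.
  by apply/systemP; rewrite w_of_embed.
exists (w_of y'); last by rewrite -y'0.
split=> // f; apply/eqP; rewrite -subr_eq0 -normr_le0 -y'1; exact: res'.
Qed.

End RelaxedFeasibility.

(** * Stability of the set-expansion estimators *)

Section InfSup.
Variable R : realType.

Lemma inf_le_add (X Y : set R) e : X !=set0 -> has_lbound Y ->
  (forall x, X x -> exists2 y, Y y & y <= x + e) -> inf Y <= inf X + e.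
Proof.
move=> X0 Ylb XY; rewrite -lerBlDr; apply: lb_le_inf => // x /XY[y Yy yle].
by rewrite lerBlDr (le_trans _ yle) //; apply: ge_inf.
Qed.

Lemma sup_le_add (X Y : set R) e : X !=set0 -> has_ubound Y ->
  (forall x, X x -> exists2 y, Y y & x <= y + e) -> sup X <= sup Y + e.
Proof.
move=> X0 Yub XY; apply: ge_sup => // x /XY[y Yy xle].
by rewrite (le_trans xle) // lerD2r; apply: ub_le_sup.
Qed.

End InfSup.

Section SupNorm.
Variable R : realType.

Lemma supnorm_ge0 n (v : 'I_n -> R) : 0 <= supnorm v.
Proof. exact: bigmax_ge_id. Qed.

Lemma supnorm_ge n (v : 'I_n -> R) i : `|v i| <= supnorm v.
Proof. exact: le_bigmax. Qed.

Lemma supnorm_le n (v : 'I_n -> R) b : 0 <= b -> (forall i, `|v i| <= b) -> supnorm v <= b.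
Proof. by move=> b0 vb; apply: bigmax_le. Qed.

Lemma norm_sum_le n (F : 'I_n -> R) e :
  (forall i, `|F i| <= e) -> `|\sum_(i < n) F i| <= n%:R * e.
Proof.
move=> Fe; apply: le_trans (ler_norm_sum _ _ _) _.
by rewrite mulr_natl -[X in e *+ X]card_ord -sumr_const; apply: ler_sum.
Qed.

End SupNorm.

Section Objective.
Variables (R : realType) (k M : nat) (C : R).

Definition objective_weight (X : 'I_k -> 'I_M -> R) (y : 'I_M) : R :=
  \sum_(f < k) X f y * (y.+1)%:R.

Lemma objectiveE X w : objective X w =
  \sum_(y < M) objective_weight X y * w y + \sum_(y < M) objective_weight X y.
Proof.
rewrite -big_split /= /objective exchange_big; apply: eq_bigr => y _.
by rewrite /objective_weight -[X in _ = _ + X]mulr1 -mulrDr mulr_suml.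
Qed.

Lemma objectiveB (X Y : 'I_k -> 'I_M -> R) w :
  objective X w - objective Y w = objective (fun f y => X f y - Y f y) w.
Proof.
rewrite /objective -sumrB; apply: eq_bigr => f _; rewrite -sumrB.
by apply: eq_bigr => y _; rewrite !mulrBl.
Qed.

Definition objective_scale : R := k%:R * (M%:R * (M%:R * (C + 1))).

Lemma objective_scale_ge0 : 0 <= C -> 0 <= objective_scale.
Proof. by move=> C0; rewrite !mulr_ge0 // addr_ge0. Qed.

Lemma norm_objective_le (X : 'I_k -> 'I_M -> R) e w : box C w -> (forall f y, `|X f y| <= e) ->
  `|objective X w| <= objective_scale * e.
Proof.
move=> w_box Xe; rewrite /objective_scale -!mulrA; apply: norm_sum_le => f.
apply: norm_sum_le => y; have /andP[w0 wC] := w_box y.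
rewrite !normrM normr_nat (ger0_norm (addr_ge0 w0 ler01)).
rewrite [_ * e]mulrC mulrCA mulrA; apply: ler_pM; rewrite ?mulr_ge0 ?addr_ge0 ?lerD2r //.
by apply: ler_pM; rewrite ?ler_nat.
Qed.

Lemma objective_bounded (X : 'I_k -> 'I_M -> R) : exists B, forall w, box C w -> `|objective X w| <= B.
Proof.
exists (objective_scale * \big[Num.max/0]_(f < k) \big[Num.max/0]_(y < M) `|X f y|).
move=> w w_box; apply: norm_objective_le => // f y.
exact: le_trans (le_bigmax _ _ y) (le_bigmax _ _ f).
Qed.

Lemma objective_image_bounded (X : 'I_k -> 'I_M -> R) (E : set ('I_M -> R)) :
  E `<=` box C ->
  has_lbound [set objective X w | w in E] /\ has_ubound [set objective X w | w in E].
Proof.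
have [B XB] := objective_bounded X => Ebox.
by split; [exists (- B) | exists B] => _ [w /Ebox/XB + <-]; rewrite ler_norml => /andP[].
Qed.

Lemma norm_matvec_le (X : 'I_k -> 'I_M -> R) e w f : box C w ->
  (forall f y, `|X f y| <= e) -> `|matvec X w f| <= M%:R * (e * C).
Proof.
move=> w_box Xe; apply: norm_sum_le => y; have /andP[w0 wC] := w_box y.
by rewrite normrM (ger0_norm w0) ler_pM.
Qed.

Lemma matvecB (X Y : 'I_k -> 'I_M -> R) w f :
  matvec X w f - matvec Y w f = matvec (fun f y => X f y - Y f y) w f.
Proof. by rewrite /matvec -sumrB; apply: eq_bigr => y _; rewrite mulrBl. Qed.

End Objective.

Lemma objective_lipschitz_F0 (R : realType) k M (A : 'I_k -> 'I_M -> R) beta C :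
  F0 A beta C !=set0 -> exists2 L, 0 <= L & forall d w, 0 <= d -> relaxed A beta C d w ->
    (exists2 w', F0 A beta C w' & objective A w' <= objective A w + L * d) /\
    (exists2 w', F0 A beta C w' & objective A w - L * d <= objective A w').
Proof.
move=> F0_neq0; set c := objective_weight A.
have [L1 L1_ge0 HL1] := F0_linear_lipschitz c F0_neq0.
have [L2 L2_ge0 HL2] := F0_linear_lipschitz (fun y => - c y) F0_neq0.
exists (L1 + L2) => [|d w d0 w_relaxed]; first exact: addr_ge0.
have L1d : 0 <= L1 * d by apply: mulr_ge0.
have L2d : 0 <= L2 * d by apply: mulr_ge0.
split.
  have [w' w'F0 le_w'] := HL1 d w d0 w_relaxed.
  by exists w' => //; rewrite !objectiveE; lra.
have [w' w'F0] := HL2 d w d0 w_relaxed; rewrite !sum_oppl => le_w'.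
by exists w' => //; rewrite !objectiveE; lra.
Qed.

Section Perturbation.
Variables (R : realType) (k M : nat) (A : 'I_k -> 'I_M -> R) (beta : 'I_k -> R) (C : R).
Hypotheses (C0 : 0 <= C) (F0_neq0 : F0 A beta C !=set0).
Variables (L : R) (Ah : 'I_k -> 'I_M -> R) (bh : 'I_k -> R) (ea eb tau : R).
Hypothesis L0 : 0 <= L.
Hypothesis L_F0 : forall d w, 0 <= d -> relaxed A beta C d w ->
  (exists2 w', F0 A beta C w' & objective A w' <= objective A w + L * d) /\
  (exists2 w', F0 A beta C w' & objective A w - L * d <= objective A w').
Hypotheses (ea0 : 0 <= ea) (eb0 : 0 <= eb).
Hypotheses (Ah_dev : forall f y, `|Ah f y - A f y| <= ea) (bh_dev : forall f, `|bh f - beta f| <= eb).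

Local Notation rho := (M%:R * (ea * C) + eb).
Hypothesis rho_le_tau : rho <= tau.

Let residual (w : 'I_M -> R) : 'I_k -> R := fun f => matvec Ah w f - bh f.

Lemma residual_dev w f : box C w ->
  `|residual w f - (matvec A w f - beta f)| <= rho.
Proof.
move=> w_box; have -> : residual w f - (matvec A w f - beta f) =
    (matvec Ah w f - matvec A w f) - (bh f - beta f) by rewrite /residual; ring.
by rewrite matvecB; apply: le_trans (ler_normB _ _) _; rewrite lerD // norm_matvec_le.
Qed.

Lemma mhat_ge0 : 0 <= mhat Ah bh C.
Proof.
apply: lb_le_inf => [|_ [w _ <-]]; last exact: supnorm_ge0.
by exists (supnorm (residual (fun=> 0))), (fun=> 0) => // y; rewrite lexx.
Qed.

Lemma supnorm_residual_F0 w : F0 A beta C w -> supnorm (residual w) <= rho.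
Proof.
move=> [w_box w_eq]; apply: supnorm_le => [|f]; first by rewrite addr_ge0 ?mulr_ge0.
by have := residual_dev f w_box; rewrite w_eq subrr subr0.
Qed.

Lemma F0_sub_expanded : F0 A beta C `<=` expanded Ah bh C tau.
Proof.
move=> w w_F0; split; first by case: w_F0.
apply: le_trans (supnorm_residual_F0 w_F0) _; exact: ler_wpDl mhat_ge0 rho_le_tau.
Qed.

Lemma expanded_sub_relaxed : expanded Ah bh C tau `<=` relaxed A beta C (2 * rho + tau).
Proof.
move=> w [w_box w_exp]; split=> // f.
have [w0 w0_F0] := F0_neq0.
have mhat_rho : mhat Ah bh C <= rho.
  apply: le_trans (supnorm_residual_F0 w0_F0).
  apply: ge_inf; first by exists 0 => _ [v _ <-]; exact: supnorm_ge0.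
  by exists w0 => //; case: w0_F0.
have := residual_dev f w_box; have := le_trans (supnorm_ge (residual w) f) w_exp.
rewrite !ler_norml => /andP[h1 h2] /andP[h3 h4]; apply/andP; split; lra.
Qed.

Let obj_dev w : box C w -> `|objective Ah w - objective A w| <= objective_scale k M C * ea.
Proof. by move=> w_box; rewrite objectiveB; apply: norm_objective_le. Qed.

Let slack_ge0 : 0 <= 2 * rho + tau.
Proof.
have rho0 : 0 <= rho by rewrite addr_ge0 ?mulr_ge0.
by rewrite addr_ge0 ?mulr_ge0 // (le_trans rho0).
Qed.

Let Ld_ge0 : 0 <= L * (2 * rho + tau).
Proof. exact: mulr_ge0. Qed.

Lemma thetahat_min_dev :
  `|thetahat_min Ah bh C tau - theta_min A beta C| <=
    L * (2 * rho + tau) + objective_scale k M C * ea.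
Proof.
have [w0 w0_F0] := F0_neq0.
have [S_lb _] := @objective_image_bounded _ _ _ C A (F0 A beta C) (fun w => @proj1 _ _).
have [Sh_lb _] := @objective_image_bounded _ _ _ C Ah (expanded Ah bh C tau) (fun w => @proj1 _ _).
rewrite ler_distl; apply/andP; split.
  rewrite lerBlDl [X in _ <= X]addrC; apply: inf_le_add => //.
    by exists (objective Ah w0), w0 => //; exact: F0_sub_expanded.
  move=> _ [w w_exp <-]; have [[w' w'_F0 le_w'] _] :=
    L_F0 slack_ge0 (expanded_sub_relaxed w_exp).
  exists (objective A w'); first by exists w'.
  have := obj_dev (proj1 w_exp); rewrite ler_norml => /andP[]; lra.
apply: le_trans (_ : _ <= theta_min A beta C + objective_scale k M C * ea) _.
  apply: inf_le_add => //; first by exists (objective A w0), w0.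
  move=> _ [w w_F0 <-]; exists (objective Ah w); first by exists w => //; exact: F0_sub_expanded.
  have := obj_dev (proj1 w_F0); rewrite ler_norml => /andP[]; lra.
by rewrite lerD2l lerDr Ld_ge0.
Qed.

Lemma thetahat_max_dev :
  `|thetahat_max Ah bh C tau - theta_max A beta C| <=
    L * (2 * rho + tau) + objective_scale k M C * ea.
Proof.
have [w0 w0_F0] := F0_neq0.
have [_ S_ub] := @objective_image_bounded _ _ _ C A (F0 A beta C) (fun w => @proj1 _ _).
have [_ Sh_ub] := @objective_image_bounded _ _ _ C Ah (expanded Ah bh C tau) (fun w => @proj1 _ _).
rewrite ler_distl; apply/andP; split.
  apply: le_trans (_ : theta_max A beta C - objective_scale k M C * ea <= _).
    by rewrite lerD2l lerN2 lerDr Ld_ge0.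
  rewrite lerBlDl [X in _ <= X]addrC; apply: sup_le_add => //; first by exists (objective A w0), w0.
  move=> _ [w w_F0 <-]; exists (objective Ah w); first by exists w => //; exact: F0_sub_expanded.
  have := obj_dev (proj1 w_F0); rewrite ler_norml => /andP[]; lra.
apply: sup_le_add => //.
  by exists (objective Ah w0), w0 => //; exact: F0_sub_expanded.
move=> _ [w w_exp <-]; have [_ [w' w'_F0 le_w']] :=
  L_F0 slack_ge0 (expanded_sub_relaxed w_exp).
exists (objective A w'); first by exists w'.
have := obj_dev (proj1 w_exp); rewrite ler_norml => /andP[]; lra.
Qed.

End Perturbation.

Lemma theta_deviation (R : realType) k M (A : 'I_k -> 'I_M -> R) beta C :
  0 <= C -> F0 A beta C !=set0 ->
  exists2 L, 0 <= L & forall Ah bh ea eb tau, 0 <= ea -> 0 <= eb ->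
    (forall f y, `|Ah f y - A f y| <= ea) -> (forall f, `|bh f - beta f| <= eb) ->
    M%:R * (ea * C) + eb <= tau ->
    `|thetahat_min Ah bh C tau - theta_min A beta C| <= L * tau + objective_scale k M C * ea /\
    `|thetahat_max Ah bh C tau - theta_max A beta C| <= L * tau + objective_scale k M C * ea.
Proof.
move=> C0 F0_neq0; have [L L0 L_F0] := objective_lipschitz_F0 F0_neq0.
exists (3 * L) => [|Ah bh ea eb tau ea0 eb0 Ah_dev bh_dev rho_tau]; first exact: mulr_ge0.
have slack : L * (2 * (M%:R * (ea * C) + eb) + tau) <= 3 * L * tau by nra.
have := thetahat_min_dev C0 F0_neq0 L0 L_F0 ea0 eb0 Ah_dev bh_dev rho_tau.
have := thetahat_max_dev C0 F0_neq0 L0 L_F0 ea0 eb0 Ah_dev bh_dev rho_tau.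
lra.
Qed.

Definition entry_dev (R : realType) k M (X Y : 'I_k -> 'I_M -> R) : R :=
  \big[Num.max/0]_(f < k) \big[Num.max/0]_(y < M) `|X f y - Y f y|.

Lemma entry_dev_ge0 (R : realType) k M (X Y : 'I_k -> 'I_M -> R) : 0 <= entry_dev X Y.
Proof. exact: bigmax_ge_id. Qed.

Lemma le_entry_dev (R : realType) k M (X Y : 'I_k -> 'I_M -> R) f y :
  `|X f y - Y f y| <= entry_dev X Y.
Proof. exact: le_trans (le_bigmax _ _ y) (le_bigmax _ _ f). Qed.

Lemma theta_deviation_rate (R : realType) k M (A : 'I_k -> 'I_M -> R) beta C :
  0 <= C -> F0 A beta C !=set0 ->
  exists2 L, 0 <= L & forall Ah bh K1 K2 s kappa, 0 < s ->
    entry_dev Ah A <= K1 * s -> supnorm (fun f => bh f - beta f) <= K2 * s ->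
    Num.max 1 (M%:R * (K1 * C) + K2) <= kappa ->
    `|thetahat_min Ah bh C (kappa * s) - theta_min A beta C|
       <= (L + objective_scale k M C * K1) * (kappa * s) /\
    `|thetahat_max Ah bh C (kappa * s) - theta_max A beta C|
       <= (L + objective_scale k M C * K1) * (kappa * s).
Proof.
move=> C0 F0_neq0; have [L L0 dev] := theta_deviation C0 F0_neq0.
exists L => // Ah bh K1 K2 s kappa s0 Ah_K1 bh_K2; rewrite ge_max => /andP[kappa1 kappa_K].
have ea0 := entry_dev_ge0 Ah A; have eb0 := supnorm_ge0 (fun f => bh f - beta f).
have K1_0 : 0 <= K1 by rewrite -(pmulr_lge0 _ s0) (le_trans ea0).
have B0 := objective_scale_ge0 k M C0.
have rho_tau : M%:R * (entry_dev Ah A * C) + supnorm (fun f => bh f - beta f) <= kappa * s.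
  have : M%:R * (entry_dev Ah A * C) <= M%:R * (K1 * s * C) by rewrite ler_wpM2l ?ler_wpM2r.
  nra.
have [dev_min dev_max] := dev Ah bh _ _ (kappa * s) ea0 eb0 (le_entry_dev Ah A)
  (supnorm_ge (fun f => bh f - beta f)) rho_tau.
have s_le : s <= kappa * s by nra.
have ea_le : entry_dev Ah A <= K1 * (kappa * s) by apply: le_trans Ah_K1 _; rewrite ler_wpM2l.
have BK1 : objective_scale k M C * entry_dev Ah A <= objective_scale k M C * K1 * (kappa * s).
  by rewrite -mulrA ler_wpM2l.
rewrite mulrDl; split; lra.
Qed.

(** * Bounds in outer probability *)

Section ExceptionalEvents.
Variables (R : realType) (d : measure_display) (T : measurableType d).
Variable P : probability T R.

Definition holds_except (eps : R) (Q : T -> Prop) : Prop :=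
  exists S, [/\ measurable S, (P S <= eps%:E)%E & forall t, ~ S t -> Q t].

Lemma holds_exceptW eps (Q Q' : T -> Prop) :
  (forall t, Q t -> Q' t) -> holds_except eps Q -> holds_except eps Q'.
Proof. by move=> QQ' [S [mS PS SQ]]; exists S; split=> // t /SQ/QQ'. Qed.

Lemma holds_exceptI e1 e2 (Q1 Q2 : T -> Prop) :
  holds_except e1 Q1 -> holds_except e2 Q2 -> holds_except (e1 + e2) (fun t => Q1 t /\ Q2 t).
Proof.
move=> [S1 [mS1 PS1 SQ1]] [S2 [mS2 PS2 SQ2]]; exists (S1 `|` S2); split.
- exact: measurableU.
- by rewrite EFinD (le_trans (measureU2 P mS1 mS2)) ?leeD.
- by move=> t nS; split; [apply: SQ1 | apply: SQ2] => S; apply: nS; [left | right].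
Qed.

Lemma OpP (X : nat -> T -> R) (a : nat -> R) :
  Op P X a <-> forall eps, 0 < eps -> exists Mc N, forall n, (N <= n)%N ->
    holds_except eps (fun t => `|X n t| <= Mc * a n).
Proof.
split=> XO eps /XO[Mc [N XN]]; exists Mc, N => n /XN[S [mS XS PS]]; exists S; split=> // t.
  by move=> nSt; rewrite leNgt; apply/negP => /XS.
by move=> /= lt_X; apply: contrapT => /PS; rewrite leNgt lt_X.
Qed.

End ExceptionalEvents.

Unset Implicit Arguments.

Theorem theorem2 (R : realType) (d : measure_display) (T : measurableType d)
  (P : probability T R) (k M : nat) (hM : (1 <= M)%N)
  (A : 'I_k -> 'I_M -> R) (beta : 'I_k -> R) (C : R)
  (hA : forall f y, 0 <= A f y <= 1) (hbeta : forall f, 0 <= beta f <= 1)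
  (hC : 0 < C) (hF0 : F0 A beta C !=set0)
  (Ahat : nat -> T -> 'I_k -> 'I_M -> R) (bhat : nat -> T -> 'I_k -> R)
  (hAhat : Op P (fun n t => \big[Num.max/0]_(f < k) \big[Num.max/0]_(y < M)
                              `|Ahat n t f y - A f y|)
              (fun n => (Num.sqrt n%:R)^-1))
  (hbhat : Op P (fun n t => \big[Num.max/0]_(f < k) `|bhat n t f - beta f|)
              (fun n => (Num.sqrt n%:R)^-1))
  (kappa : nat -> R) (hkpos : forall n, 0 < kappa n)
  (hkinf : kappa @ \oo --> +oo)
  (hkrate : (fun n => kappa n / Num.sqrt n%:R) @ \oo --> (0 : R)) :
  Op P (fun n t => thetahat_min (Ahat n t) (bhat n t) C (kappa n / Num.sqrt n%:R)
                   - theta_min A beta C)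
       (fun n => kappa n / Num.sqrt n%:R)
  /\
  Op P (fun n t => thetahat_max (Ahat n t) (bhat n t) C (kappa n / Num.sqrt n%:R)
                   - theta_max A beta C)
       (fun n => kappa n / Num.sqrt n%:R).
Proof.
have [L L0 dev] := theta_deviation_rate (ltW hC) hF0.
suff rate eps : 0 < eps -> exists Mc N, forall n, (N <= n)%N -> holds_except P eps (fun t =>
    `|thetahat_min (Ahat n t) (bhat n t) C (kappa n / Num.sqrt n%:R) - theta_min A beta C|
      <= Mc * (kappa n / Num.sqrt n%:R) /\
    `|thetahat_max (Ahat n t) (bhat n t) C (kappa n / Num.sqrt n%:R) - theta_max A beta C|
      <= Mc * (kappa n / Num.sqrt n%:R)).
  by split; apply/OpP => eps /rate[Mc [N HN]]; exists Mc, N => n /HN; apply: holds_exceptW => t [].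
move=> eps0; have eps2 : 0 < eps / 2 by rewrite divr_gt0.
have [K1 [N1 Ahat_K1]] := (OpP _ _ _).1 hAhat _ eps2.
have [K2 [N2 bhat_K2]] := (OpP _ _ _).1 hbhat _ eps2.
have [N3 _ kappa_large] := (cvgryPge kappa).1 hkinf (Num.max 1 (M%:R * (K1 * C) + K2)).
exists (L + objective_scale k M C * K1), (maxn (maxn N1 N2) (maxn N3 1)) => n le_Nn.
rewrite [eps]splitr; apply: holds_exceptW (holds_exceptI (Ahat_K1 n _) (bhat_K2 n _)); try lia.
move=> t [/(le_trans (ler_norm _)) Ah_K1 /(le_trans (ler_norm _)) bh_K2].
apply: (dev _ _ _ _ _ _ _ Ah_K1 bh_K2); last by apply: kappa_large; rewrite /=; lia.
by rewrite invr_gt0 sqrtr_gt0 ltr0n; lia.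
Qed.
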